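(* If $T$ is a subcubic tree, then $\gamma_e(T)\le 2\gamma_{e,f}^*(T)$.
   Context: All graphs are finite, simple and undirected; subcubic means maximum degree at most $3$. For a graph $G$ and $D\subseteq V(G)$, and vertices $u,v$, let $\mathrm{dist}_{(G,D)}(u,v)$ be the minimum number of edges of a path $P$ in $G$ between $u$ and $v$ such that $D$ contains exactly one endvertex of $P$ and no internal vertex of $P$ ($\infty$ if no such path exists; in particular $\mathrm{dist}_{(G,D)}(u,u)=0$ for $u\in D$). Let $w_{(G,D)}(u)=\sum_{v\in D}\left(\frac12\right)^{\mathrm{dist}_{(G,D)}(u,v)-1}$ with $\left(\frac12\right)^\infty=0$. $D$ is an exponential dominating set if $w_{(G,D)}(u)\ge 1$ for every $u\in V(G)$, and $\gamma_e(G)$ is the minimum size of an exponential dominating set. The fractional porous exponential domination number $\gamma_{e,f}^*(G)$ is the optimum value of the linear program: minimize $\sum_{u\in V(G)}x(u)$ subject to $\sum_{u\in V(G)}\left(\frac12\right)^{\mathrm{dist}_G(u,v)-1}x(u)\ge 1$ for every $v\in V(G)$ and $x\ge 0$, where $\mathrm{dist}_G$ is the usual distance. *)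

From HB Require Import structures.
From mathcomp Require Import all_boot all_order all_algebra.
Set Implicit Arguments. Unset Strict Implicit. Unset Printing Implicit Defensive.
Import Order.TTheory GRing.Theory Num.Theory.

Definition simple_graph (T : finType) (e : rel T) : Prop :=
  symmetric e /\ irreflexive e.

Definition subcubic (T : finType) (e : rel T) : Prop :=
  forall x : T, #|[set y | e x y]| <= 3.

(* tree: nonempty, connected, and #edges = #vertices - 1
   (ordered pairs counted, hence the factor 2). *)
Definition is_tree (T : finType) (e : rel T) : Prop :=
  [/\ 0 < #|T|, (forall x y : T, connect e x y)
    & #|[set p : T * T | e p.1 p.2]| = 2 * (#|T| - 1)].

Definition walk_len (T : finType) (e : rel T) (u v : T) (k : nat) : bool :=
  [exists p : k.-tuple T, path e u p && (last u p == v)].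

(* usual distance dist_G(u,v); None = infinity.
   A shortest walk is a path and has fewer than #|T| edges. *)
Definition gdist (T : finType) (e : rel T) (u v : T) : option nat :=
  let k := find (walk_len e u v) (iota 0 #|T|) in
  if k < #|T| then Some k else None.

(* There is a path P = u x1 ... xk (xk = v) with exactly k edges such that
   D contains exactly one endvertex of P and no internal vertex of P. *)
Definition Dpath_len (T : finType) (e : rel T) (D : {set T}) (u v : T)
    (k : nat) : bool :=
  [exists p : k.-tuple T,
    [&& path e u p, last u p == v, uniq (u :: p),
        all (fun x => x \notin D) (take k.-1 p)
      & (if u == v then u \in D else (u \in D) != (v \in D))]].

(* dist_(G,D)(u,v); None = infinity (simple paths have < #|T| edges). *)
Definition distD (T : finType) (e : rel T) (D : {set T}) (u v : T)
    : option nat :=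
  let k := find (Dpath_len e D u v) (iota 0 #|T|) in
  if k < #|T| then Some k else None.

(* (1/2)^(d-1) = 2 / 2^d, and (1/2)^infinity = 0 *)
Definition half_pow (R : numFieldType) (d : option nat) : R :=
  match d with
  | Some k => (2%:R / (2%:R ^+ k))%R
  | None => 0%R
  end.

Definition exp_weight (T : finType) (e : rel T) (D : {set T}) (u : T) : rat :=
  (\sum_(v in D) half_pow rat (distD e D u v))%R.

Definition exp_dominating (T : finType) (e : rel T) (D : {set T}) : bool :=
  [forall u : T, (1 <= exp_weight e D u)%R].

(* gamma_e(G): minimum size of an exponential dominating set
   ([set: T] is always one). *)
Definition gamma_e (T : finType) (e : rel T) : nat :=
  #|[arg min_(D < [set: T] | exp_dominating e D) #|D|]|.

Definition porous_frac_feasible (R : realFieldType) (T : finType) (e : rel T)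
    (x : T -> R) : Prop :=
  (forall u, (0 <= x u)%R) /\
  (forall v, (1 <= \sum_(u : T) half_pow R (gdist e u v) * x u)%R).

From HB Require Import structures.
From mathcomp Require Import all_boot all_order all_algebra.
From mathcomp Require Import zify ring lra.
From Stdlib Require Import FunctionalExtensionality.
Import Order.TTheory GRing.Theory Num.Theory.
Set Implicit Arguments. Unset Strict Implicit. Unset Printing Implicit Defensive.

(* Let n = #|T|.  Lower bound on the LP: root T at any vertex u.  Every other
   vertex has half the weight 2^(1 - dist(u, v)) of its parent, so
   \sum_v (3 - deg v) 2^(1 - dist(u, v)) = 6.  Adding up the LP constraints with
   the nonnegative coefficients 3 - deg v, whose sum is n + 2, gives
   n + 2 <= 6 \sum_u x u.
   Upper bound gamma_e(T) <= (n + 2) / 3: root T at a leaf and induct on sets of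
   vertices closed under taking parents.  The key configuration is a pendant
   binary tree, a full binary tree whose k leaves each carry one pendant vertex:
   its leaves exponentially dominate its 3k - 1 vertices and send weight
   2^(1 - j) to any vertex at distance j above it.  At a deepest vertex whose
   subtree is not of this kind one finds a part R of the tree (a cherry, a vertex
   above a pendant binary tree, or a leaf beside one) that can be cut off at the
   price of at most |R| / 3 dominating vertices. *)

Lemma find_iota_le (P : pred nat) n k :
  k < n -> P k -> find P (iota 0 n) <= k.
Proof.
move=> kn Pk; rewrite leqNgt; apply/negP => H.
by move: (before_find 0 H); rewrite nth_iota // add0n Pk.
Qed.

Lemma find_iota_eq (P : pred nat) n k :
  k < n -> P k -> (forall j, j < k -> ~~ P j) -> find P (iota 0 n) = k.
Proof.
move=> kn Pk Hj; apply/eqP; rewrite eqn_leq find_iota_le //=.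
have hP : has P (iota 0 n) by apply/hasP; exists k => //; rewrite mem_iota.
have fn : find P (iota 0 n) < n by rewrite -{2}(size_iota 0 n) -has_find.
have := nth_find 0 hP; rewrite nth_iota // add0n leqNgt; apply: contraL; exact: Hj.
Qed.

Lemma mem_take_neq_last (T : eqType) (y z : T) q : uniq (y :: q) ->
  z \in take (size q).-1 q -> z != last y q.
Proof.
case/lastP: q => [|q a] //; rewrite last_rcons size_rcons /= -cats1 take_size_cat //.
move=> /andP[_]; rewrite cat_uniq => /and3P[_ Hn _] Hz.
by apply: contraNneq Hn => <-; rewrite /= Hz.
Qed.

Lemma big_setU_disjoint (V : nmodType) (I : finType) (F : I -> V) (A1 A2 : {set I}) :
  [disjoint A1 & A2] ->
  (\sum_(i in A1 :|: A2) F i = \sum_(i in A1) F i + \sum_(i in A2) F i)%R.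
Proof. by move=> H; rewrite (eq_bigl [predU A1 & A2]) ?bigU // => i; rewrite !inE. Qed.

Section SetD.
Variable T : finType.
Implicit Types (S R X D A B : {set T}).

Lemma in_setU_disjoint {X S D} {z : T} : [disjoint X & S] -> z \in S ->
  (z \in D :|: X) = (z \in D).
Proof. by move=> HX Hz; rewrite inE (disjointFl HX Hz) orbF. Qed.

Lemma notin_subset_setD S R D z : D \subset S :\: R -> z \in R -> z \notin D.
Proof. by move=> H Hz; apply: contraL Hz => /(subsetP H); rewrite inE => /andP[]. Qed.

Lemma disjoint_setD S R X : X \subset R -> [disjoint X & S :\: R].
Proof.
move=> H; rewrite disjoint_subset; apply: subset_trans H _.
by apply/subsetP => z Hz; rewrite !inE Hz.
Qed.

Lemma setUI_setD S R D A B : D \subset S :\: R -> A \subset B -> B \subset R ->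
  (D :|: A) :&: B = A.
Proof.
move=> HD HAB HBR; rewrite setIUl (setIidPl HAB); apply/setUidPr.
apply/subsetP => w; rewrite inE => /andP[HwD Hw].
by move: (notin_subset_setD HD (subsetP HBR _ Hw)); rewrite HwD.
Qed.

End SetD.

(** * Exponential weights *)

Section Distances.
Variables (T : finType) (e : rel T).

Lemma walk_lenP u v k :
  reflect (exists p : seq T, [/\ size p = k, path e u p & last u p = v])
          (walk_len e u v k).
Proof.
apply: (iffP existsP) => [[p /andP[Hp /eqP Hl]]|[p [Hs Hp Hl]]].
  by exists (val p); rewrite size_tuple.
have Hs' : size p == k by rewrite Hs.
by exists (Tuple Hs'); rewrite /= Hp Hl eqxx.
Qed.

Lemma gdist_minimal u v k : walk_len e u v k ->
  (forall j, j < k -> ~~ walk_len e u v j) -> k < #|T| -> gdist e u v = Some k.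
Proof. by move=> Wk Hj kn; rewrite /gdist (find_iota_eq kn Wk Hj) kn. Qed.

Definition is_Dpath (D : {set T}) u v p :=
  [&& path e u p, last u p == v, uniq (u :: p),
      all (fun x => x \notin D) (take (size p).-1 p)
    & (if u == v then u \in D else (u \in D) != (v \in D))].

Lemma Dpath_lenP D u v k :
  reflect (exists p : seq T, size p = k /\ is_Dpath D u v p) (Dpath_len e D u v k).
Proof.
apply: (iffP existsP) => [[p Hp]|[p [Hs Hp]]].
  by exists (val p); rewrite size_tuple; split => //; rewrite /is_Dpath size_tuple.
have Hs' : size p == k by rewrite Hs.
by exists (Tuple Hs'); move: Hp; rewrite /is_Dpath /= Hs.
Qed.

Lemma Dpath_len_lt D u v k : Dpath_len e D u v k -> k < #|T|.
Proof.
case/Dpath_lenP => p [<- /and5P[_ _ Hu _ _]].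
by have := max_card (mem (u :: p)); rewrite (card_uniqP Hu).
Qed.

Lemma distD_Dpath_len D u v k : distD e D u v = Some k -> Dpath_len e D u v k.
Proof.
rewrite /distD /=; case: ifP => // Hk [<-].
have hP : has (Dpath_len e D u v) (iota 0 #|T|) by rewrite has_find size_iota.
by have := nth_find 0 hP; rewrite nth_iota // add0n.
Qed.

Lemma distD_le D u v k : Dpath_len e D u v k ->
  exists2 k', k' <= k & distD e D u v = Some k'.
Proof.
move=> H; have kn := Dpath_len_lt H; have fk := find_iota_le kn H.
exists (find (Dpath_len e D u v) (iota 0 #|T|)) => //.
by rewrite /distD (leq_ltn_trans fk kn).
Qed.

Lemma distD_Dpath (D : {set T}) u v k : distD e D u v = Some k ->
  exists p, size p = k /\ is_Dpath D u v p.
Proof. by move/distD_Dpath_len/Dpath_lenP. Qed.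

Lemma is_Dpath_cons (D : {set T}) l v w p : e l v -> l \notin D -> v \notin D ->
  l \notin v :: p -> is_Dpath D v w p -> is_Dpath D l w (v :: p).
Proof.
move=> Hlv HlD HvD Hl /and5P[Hp /eqP Hlast Hun Hall Hend].
case: p Hp Hlast Hun Hall Hend Hl => [|y p] Hp Hlast Hun Hall Hend Hl.
  by rewrite -Hlast /= eqxx (negbTE HvD) in Hend.
have HwD : w \in D.
  by case: eqP Hend => [<-|_]; rewrite (negbTE HvD) //; case: (w \in D).
have Hlw : l != w by apply: contraNneq Hl => ->; rewrite -Hlast mem_last.
apply/and5P; split; first exact/andP.
- by rewrite /= -Hlast.
- by rewrite cons_uniq Hl Hun.
- by rewrite /= HvD.
- by rewrite (negbTE Hlw) (negbTE HlD) HwD.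
Qed.

End Distances.

Section HalfPow.
Variable R : numFieldType.
Local Open Scope ring_scope.

Lemma half_pow_ge0 d : 0 <= half_pow R d.
Proof. by case: d => [k|] //=; rewrite divr_ge0 // exprn_ge0. Qed.

Lemma half_pow_le k k' : (k' <= k)%N -> half_pow R (Some k) <= half_pow R (Some k').
Proof.
move=> H; rewrite /= ler_pM2l ?ltr0n // lef_pV2 ?posrE ?exprn_gt0 ?ltr0n //.
by rewrite ler_eXn2l // ltr1n.
Qed.

Lemma half_powS k : half_pow R (Some k.+1) = half_pow R (Some k) / 2%:R.
Proof. by rewrite /= exprS invfM mulrA mulrAC. Qed.

Lemma half_pow0 : half_pow R (Some 0) = 2%:R.
Proof. by rewrite /= expr0 divr1. Qed.

Lemma half_pow1 : half_pow R (Some 1) = 1.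
Proof. by rewrite /= expr1 divff // pnatr_eq0. Qed.

End HalfPow.

Section ExpWeight.
Variables (T : finType) (e : rel T) (D : {set T}).
Local Open Scope ring_scope.

Lemma half_pow_Dpath_le u v p : is_Dpath e D u v p ->
  half_pow rat (Some (size p)) <= half_pow rat (distD e D u v).
Proof.
move=> H; have : Dpath_len e D u v (size p) by apply/Dpath_lenP; exists p.
by case/distD_le => k' Hk ->; apply: half_pow_le.
Qed.

Lemma exp_weight_ge_subset u (B : {set T}) : B \subset D ->
  \sum_(v in B) half_pow rat (distD e D u v) <= exp_weight e D u.
Proof.
move=> HB; rewrite /exp_weight [X in _ <= X](big_setID B) /= (setIidPr HB) lerDl.
by apply: sumr_ge0 => v _; apply: half_pow_ge0.
Qed.

Lemma exp_weight_in u : u \in D -> 2%:R <= exp_weight e D u.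
Proof.
move=> Hu; have HB : [set u] \subset D by rewrite sub1set.
apply: le_trans (exp_weight_ge_subset u HB); rewrite big_set1 -half_pow0.
by apply: (half_pow_Dpath_le (p := [::])); rewrite /is_Dpath /= eqxx Hu.
Qed.

Lemma exp_weight_adj u v : v \in D -> u \notin D -> e u v -> 1 <= exp_weight e D u.
Proof.
move=> Hv Hu Huv; have HB : [set v] \subset D by rewrite sub1set.
apply: le_trans (exp_weight_ge_subset u HB); rewrite big_set1 -half_pow1.
have Hne : u != v by apply: contraNneq Hu => ->.
apply: (half_pow_Dpath_le (p := [:: v])).
by rewrite /is_Dpath /= Huv eqxx inE Hne (negbTE Hne) (negbTE Hu) Hv.
Qed.

Lemma exp_weight_in_ge1 u : u \in D -> 1 <= exp_weight e D u.
Proof. by move=> /exp_weight_in; apply: le_trans; rewrite ler1n. Qed.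

End ExpWeight.

Lemma gamma_e_le (T : finType) (e : rel T) D : exp_dominating e D -> gamma_e e <= #|D|.
Proof.
move=> HD; have Hi : exp_dominating e [set: T].
  by apply/forallP => u; apply: exp_weight_in_ge1; rewrite inE.
by rewrite /gamma_e; case: arg_minnP => // A _ /(_ D HD).
Qed.

Section Induced.
Variables (T : finType) (e : rel T).
Implicit Types (S D X : {set T}).

Definition induced S : rel T := fun x y => [&& e x y, x \in S & y \in S].

Lemma path_induced_sub S x p : path (induced S) x p -> {subset p <= S}.
Proof.
elim: p x => [|y p IH] x //= /andP[/and3P[_ _ Hy] Hp] z.
by rewrite inE => /orP[/eqP ->|/(IH _ Hp)].
Qed.

Lemma induced_subrel S S' : S' \subset S -> subrel (induced S') (induced S).
Proof.
move=> H x y /and3P[Hxy Hx Hy].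
by rewrite /induced Hxy (subsetP H _ Hx) (subsetP H _ Hy).
Qed.

Lemma is_Dpath_induced_lift S S' D' X u v p : S' \subset S -> [disjoint X & S'] ->
  u \in S' -> is_Dpath (induced S') D' u v p -> is_Dpath (induced S) (D' :|: X) u v p.
Proof.
move=> HSS HX Hu /and5P[Hp Hl Hun Hall Hend].
have HpS := path_induced_sub Hp.
have HvS : v \in S'.
  by move/eqP: Hl => <-; move: (mem_last u p); rewrite inE => /orP[/eqP ->|/HpS].
rewrite /is_Dpath (sub_path (induced_subrel HSS) Hp) Hl Hun /=.
rewrite !(in_setU_disjoint HX) //.
rewrite Hend andbT; apply/allP => z Hz.
by rewrite (in_setU_disjoint HX) ?(allP Hall) // HpS // (mem_take Hz).
Qed.

Lemma induced_setT : induced [set: T] = e.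
Proof.
by apply: functional_extensionality => x; apply: functional_extensionality => y;
  rewrite /induced !inE !andbT.
Qed.

Local Open Scope ring_scope.

Lemma exp_weight_induced_mono S S' D' X u : S' \subset S -> [disjoint X & S'] ->
  u \in S' -> exp_weight (induced S') D' u <= exp_weight (induced S) (D' :|: X) u.
Proof.
move=> HSS HX Hu; apply: le_trans (exp_weight_ge_subset _ u (subsetUl D' X)).
apply: ler_sum => v _; case Hd: (distD _ D' u v) => [k|]; last exact: half_pow_ge0.
case: (distD_Dpath Hd) => p [<- Hc].
exact: half_pow_Dpath_le (is_Dpath_induced_lift HSS HX Hu Hc).
Qed.

(* A D'-path of S' starting at v extends, through the edge lv, to a
   (D' :|: X)-path of S starting at l, one edge longer. *)
Lemma exp_weight_extend S S' D' X v l : S' \subset S -> D' \subset S' ->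
  [disjoint X & S'] -> v \in S' -> v \notin D' -> l \in S -> l \notin S' ->
  l \notin X -> e l v ->
  exp_weight (induced S') D' v / 2%:R <=
    \sum_(w in D') half_pow rat (distD (induced S) (D' :|: X) l w).
Proof.
move=> HSS HD HX Hv HvD Hl HlS HlX Hlv.
rewrite /exp_weight mulr_suml; apply: ler_sum => w Hw.
case Hd: (distD _ D' v w) => [k|]; last by rewrite mul0r; apply: half_pow_ge0.
case: (distD_Dpath Hd) => p [<- Hc]; rewrite -half_powS.
apply: (half_pow_Dpath_le (p := v :: p)); apply: is_Dpath_cons.
- by rewrite /induced Hlv Hl (subsetP HSS).
- by rewrite inE (negbTE HlX) orbF; apply: contra HlS => /(subsetP HD).
- by rewrite (in_setU_disjoint HX).
- case/and5P: Hc => Hp _ _ _ _; rewrite inE negb_or; apply/andP; split.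
    by apply: contraNneq HlS => ->.
  by apply: contra HlS => /(path_induced_sub Hp).
- exact: is_Dpath_induced_lift HSS HX Hv Hc.
Qed.

End Induced.

(** * Rooted trees and the lower bound *)

Section Tree.
Variables (T : finType) (e : rel T).
Hypothesis Hsym : symmetric e.
Hypothesis Hconn : forall x y : T, connect e x y.
Hypothesis Hcard : #|[set p : T * T | e p.1 p.2]| = 2 * (#|T| - 1).

Definition deg v := #|[set y | e v y]|.

Section Rooted.
Variable r : T.

Lemma walk_len_exists v : exists k, walk_len e r v k.
Proof.
case/connectP: (Hconn r v) => p Hp Hl; exists (size p); apply/walk_lenP; by exists p.
Qed.

Definition depth v := ex_minn (walk_len_exists v).

Lemma depth_walk v : walk_len e r v (depth v).
Proof. by rewrite /depth; case: ex_minnP. Qed.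

Lemma depth_min v k : walk_len e r v k -> depth v <= k.
Proof. by rewrite /depth; case: ex_minnP => m _ H /H. Qed.

Lemma depth_lt v : depth v < #|T|.
Proof.
case/connectP: (Hconn r v) => p Hp ->.
case: (shortenP Hp) => p' Hp' Hu _.
have W : walk_len e r (last r p') (size p') by apply/walk_lenP; exists p'.
apply: leq_ltn_trans (depth_min W) _.
by have := max_card (mem (r :: p')); rewrite (card_uniqP Hu).
Qed.

Lemma gdist_depth v : gdist e r v = Some (depth v).
Proof.
apply: gdist_minimal (depth_walk v) _ (depth_lt v) => j Hj.
by apply/negP => /depth_min; rewrite leqNgt Hj.
Qed.

Lemma depth_root : depth r = 0.
Proof.
by apply/eqP; rewrite -leqn0; apply: depth_min; apply/walk_lenP; exists [::].
Qed.

Lemma depth0 v : depth v = 0 -> v = r.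
Proof.
by move=> H; have := depth_walk v; rewrite H => /walk_lenP[p [/size0nil -> _ /= ->]].
Qed.

Lemma depth_edge a b : e a b -> depth b <= (depth a).+1.
Proof.
move=> Hab; apply: depth_min; case/walk_lenP: (depth_walk a) => p [Hs Hp Hl].
apply/walk_lenP; exists (rcons p b).
by rewrite size_rcons Hs rcons_path Hp Hl Hab last_rcons.
Qed.

Lemma parent_exists v : v != r -> exists a, e a v && ((depth a).+1 == depth v).
Proof.
move=> Hv; case/walk_lenP: (depth_walk v) => p [Hs Hp Hl].
case/lastP: p Hs Hp Hl => [|p b] Hs Hp Hl; first by move: Hl Hv => /= ->; rewrite eqxx.
rewrite last_rcons in Hl; subst b; move: Hp; rewrite rcons_path => /andP[Hp He].
exists (last r p); rewrite He /=.
rewrite size_rcons in Hs; rewrite eqn_leq -{1}Hs ltnS (depth_edge He) andbT.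
by apply: depth_min; apply/walk_lenP; exists p.
Qed.

Definition parent v := if v == r then r else
  odflt r [pick a | e a v && ((depth a).+1 == depth v)].

Lemma parent_root : parent r = r. Proof. by rewrite /parent eqxx. Qed.

Lemma parent_spec v : v != r -> e (parent v) v /\ (depth (parent v)).+1 = depth v.
Proof.
move=> Hv; rewrite /parent (negbTE Hv); case: pickP => [a /andP[H1 /eqP H2]|H] //=.
by case: (parent_exists Hv) => a Ha; move: (H a); rewrite Ha.
Qed.

Lemma parent_edge v : v != r -> e (parent v) v.
Proof. by case/parent_spec. Qed.

Lemma depth_parent v : v != r -> (depth (parent v)).+1 = depth v.
Proof. by case/parent_spec. Qed.

Lemma parent_not_mutual a b :
  ~~ (((a != r) && (b == parent a)) && ((b != r) && (a == parent b))).
Proof.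
apply/negP => /andP[/andP[Ha /eqP Hb] /andP[Hb' /eqP Ha']].
have := ltnSn (depth a); rewrite -{1}(depth_parent Ha) -Hb -(depth_parent Hb') -Ha'.
by rewrite ltnNge leqnSn.
Qed.

(* The parent arcs and their reversals are 2 (#|T| - 1) distinct arcs of e,
   which by Hcard are all of them. *)
Lemma tree_edgeE a b :
  e a b = ((a != r) && (b == parent a)) || ((b != r) && (a == parent b)).
Proof.
pose P1 := [set p : T * T | (p.1 != r) && (p.2 == parent p.1)].
pose P2 := [set p : T * T | (p.2 != r) && (p.1 == parent p.2)].
pose E := [set p : T * T | e p.1 p.2].
have sub : P1 :|: P2 \subset E.
  apply/subsetP => [[x y]]; rewrite !inE /=.
  by case/orP => /andP[H /eqP ->]; rewrite ?parent_edge // Hsym parent_edge.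
have c1 : #|P1| = #|T| - 1.
  have -> : P1 = [set (v, parent v) | v in [set~ r]].
    apply/setP => [[x y]]; rewrite !inE /=; apply/idP/imsetP.
    - by case/andP => Hx /eqP ->; exists x; rewrite ?inE.
    - by case=> v; rewrite !inE => Hv [-> ->]; rewrite Hv eqxx.
  by rewrite card_imset ?cardsC1 ?subn1 // => v w [].
have c2 : #|P2| = #|T| - 1.
  have -> : P2 = [set (parent v, v) | v in [set~ r]].
    apply/setP => [[x y]]; rewrite !inE /=; apply/idP/imsetP.
    - by case/andP => Hy /eqP ->; exists y; rewrite ?inE.
    - by case=> v; rewrite !inE => Hv [-> ->]; rewrite Hv eqxx.
  by rewrite card_imset ?cardsC1 ?subn1 // => v w [].
have dis : P1 :&: P2 = set0.
  by apply/setP => [[x y]]; rewrite !inE /=; apply/negbTE/parent_not_mutual.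
have /eqP HE : P1 :|: P2 == E.
  by rewrite eqEcard sub /= cardsU dis cards0 c1 c2 Hcard; lia.
by move: (f_equal (fun A : {set T * T} => (a, b) \in A) HE); rewrite /= !inE.
Qed.

Local Open Scope ring_scope.

Lemma sum_deg_weighted (R : numDomainType) (g : T -> R) :
  \sum_v (deg v)%:R * g v =
  \sum_(v | v != r) g v + \sum_(y | y != r) g (parent y).
Proof.
have Hd v : (deg v)%:R = \sum_y (((v != r) && (y == parent v))%:R
                                + ((y != r) && (v == parent y))%:R) :> R.
  rewrite /deg -sum1_card natr_sum big_mkcond /=; apply: eq_bigr => y _.
  rewrite inE tree_edgeE; move: (parent_not_mutual v y).
  by case: (v != r); case: (y == parent v); case: (y != r); case: (v == parent y);
    rewrite /= ?addr0 ?add0r.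
under eq_bigr do rewrite Hd mulr_suml.
under eq_bigr do under eq_bigr do rewrite mulrDl.
under eq_bigr do rewrite big_split /=.
rewrite big_split /=; congr (_ + _); last rewrite exchange_big;
  rewrite [RHS]big_mkcond /=; apply: eq_bigr => v _;
  rewrite (bigD1 (parent v)) //= eqxx andbT big1 ?addr0 => [|y /negbTE ->];
  by rewrite ?andbF ?mul0r //; case: (v != r); rewrite ?mul1r ?mul0r.
Qed.

Lemma sum_deg (R : numDomainType) :
  \sum_v (deg v)%:R = ((#|T| - 1) + (#|T| - 1))%N%:R :> R.
Proof.
have := sum_deg_weighted (fun _ => 1 : R); under eq_bigr do rewrite mulr1.
move=> ->; rewrite subn1 -(cardsC1 r) natrD -sum1_card natr_sum.
by congr (_ + _); apply: eq_bigl => v; rewrite !inE.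
Qed.

Lemma sum_deficit (R : numFieldType) (g : T -> R) : g r = 2%:R ->
  (forall y, y != r -> g (parent y) = 2%:R * g y) ->
  \sum_v (3%:R - (deg v)%:R) * g v = 6%:R.
Proof.
move=> g_r g_parent.
have sum_g : \sum_v g v = g r + \sum_(v | v != r) g v by rewrite (bigD1 r).
under eq_bigr do rewrite mulrBl.
rewrite sumrB sum_deg_weighted -mulr_sumr sum_g (eq_bigr _ g_parent) -mulr_sumr g_r.
ring.
Qed.

Lemma sum_deficit_half_pow (R : numFieldType) :
  \sum_v (3%:R - (deg v)%:R) * half_pow R (Some (depth v)) = 6%:R.
Proof.
apply: sum_deficit => [|y Hy]; first by rewrite depth_root half_pow0.
by rewrite -(depth_parent Hy) half_powS; field.
Qed.

End Rooted.

Local Open Scope ring_scope.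

Lemma porous_frac_lower_bound (Hsub : subcubic e) (u0 : T)
    (R : realFieldType) (x : T -> R) :
  porous_frac_feasible e x -> (#|T| + 2)%:R <= 6%:R * \sum_u x u.
Proof.
case=> _ Hx1.
set c := fun v => 3%:R - (deg v)%:R : R.
have c0 v : 0 <= c v by rewrite /c subr_ge0 ler_nat; apply: Hsub.
have Hn : (0 < #|T|)%N by apply/card_gt0P; exists u0.
have <- : \sum_v c v = (#|T| + 2)%:R.
  rewrite sumrB (sum_deg u0) sumr_const.
  have -> : (3 : R) *+ #|T| = (3 * #|T|)%N%:R by rewrite natrM mulr_natr.
  by rewrite -natrB; [congr (_%:R) | ]; lia.
have <- : \sum_v c v * (\sum_u half_pow R (gdist e u v) * x u) = 6%:R * \sum_u x u.
  under eq_bigr do rewrite mulr_sumr.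
  rewrite exchange_big mulr_sumr; apply: eq_bigr => u _.
  rewrite -(sum_deficit_half_pow u R) mulr_suml; apply: eq_bigr => v _.
  by rewrite (gdist_depth u) mulrA.
by apply: ler_sum => v _; rewrite ler_peMr.
Qed.

Lemma exists_leaf (u0 : T) : exists r, (deg r <= 1)%N.
Proof.
case: (@arg_maxnP T u0 xpredT (depth u0) isT) => v _ Hmax; exists v.
have Hs : [set y | e v y] \subset [set parent u0 v].
  apply/subsetP => y; rewrite !inE (tree_edgeE u0).
  case/orP => [/andP[_ //]|/andP[Hy /eqP Hv]].
  by have := depth_parent Hy; rewrite -Hv; have := Hmax y isT; lia.
by have := subset_leq_card Hs; rewrite cards1.
Qed.

End Tree.

(** * Subtrees of a rooted graph *)

Section Subtrees.
Variables (T : finType) (e : rel T).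
Hypothesis Hsym : symmetric e.
Hypothesis Hconn : forall x y : T, connect e x y.
Variable r : T.
Implicit Types (S D X A B R : {set T}).

Local Notation depth := (depth Hconn r).
Local Notation parent := (parent Hconn r).
Local Notation induced := (induced e).

Lemma neq_root v : 0 < depth v -> v != r.
Proof. by apply: contraTneq => ->; rewrite depth_root. Qed.

Lemma depth_iter k w : k <= depth w -> depth (iter k parent w) = depth w - k.
Proof.
elim: k => [|k IH] H; first by rewrite subn0.
have {}IH := IH (ltnW H).
have Hr : iter k parent w != r by apply: neq_root; rewrite IH subn_gt0.
by have := depth_parent Hconn Hr; rewrite iterS IH; lia.
Qed.

Definition ancestor v w :=
  (depth v <= depth w) && (iter (depth w - depth v) parent w == v).

Definition subtree S v := [set w in S | ancestor v w].
Definition children S v := [set w in S | (w != r) && (parent w == v)].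
Definition parent_closed S := forall w, w \in S -> parent w \in S.

Lemma ancestor_refl v : ancestor v v.
Proof. by rewrite /ancestor leqnn subnn eqxx. Qed.

Lemma ancestor_root w : ancestor r w.
Proof.
rewrite /ancestor depth_root subn0 leq0n; apply/eqP/(depth0 (Hconn := Hconn)).
by rewrite depth_iter // subnn.
Qed.

Lemma ancestor_depth v w : ancestor v w -> depth v <= depth w.
Proof. by case/andP. Qed.

Lemma ancestor_eq_depth c1 c2 w : ancestor c1 w -> ancestor c2 w ->
  depth c1 = depth c2 -> c1 = c2.
Proof. by case/andP => _ /eqP H1; case/andP => _ /eqP H2 Heq; rewrite -H1 -H2 Heq. Qed.

Lemma ancestor_trans u v w : ancestor u v -> ancestor v w -> ancestor u w.
Proof.
case/andP => H1 /eqP H2; case/andP => H3 /eqP H4.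
rewrite /ancestor (leq_trans H1 H3) /=.
have -> : depth w - depth u = (depth v - depth u) + (depth w - depth v) by lia.
by rewrite iterD H4 H2.
Qed.

Lemma ancestor_step v w : ancestor v w -> w != v ->
  exists c, [/\ c != r, parent c = v, ancestor c w & depth c = (depth v).+1].
Proof.
case/andP => Hd /eqP Hi Hne.
have Hlt : depth v < depth w.
  rewrite ltn_neqAle Hd andbT; apply: contraNneq Hne => Heq.
  by rewrite -Hi -Heq subnn.
pose c := iter (depth w - depth v).-1 parent w.
have Hdc : depth c = (depth v).+1 by rewrite depth_iter; lia.
have Hc : c != r by apply: neq_root; rewrite Hdc.
exists c; split => //.
  by rewrite /c -iterS prednK ?Hi // subn_gt0.
rewrite /ancestor Hdc Hlt /=.
by have -> : depth w - (depth v).+1 = (depth w - depth v).-1 by lia.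
Qed.

Lemma ancestor_parent v w : ancestor v (parent w) -> w != r -> ancestor v w.
Proof.
move=> /andP[H1 /eqP H2] Hw; have Hd := depth_parent Hconn Hw.
by rewrite /ancestor -Hd (leqW H1) /= subSn // iterSr H2.
Qed.

Lemma parent_closed_ancestor S v w :
  parent_closed S -> w \in S -> ancestor v w -> v \in S.
Proof.
move=> HS Hw /andP[_ /eqP <-].
by elim: (depth w - depth v) => [|k IH] //=; apply: HS.
Qed.

Lemma parent_closed_setD_subtree S v :
  parent_closed S -> parent_closed (S :\: subtree S v).
Proof.
move=> HS w; rewrite !inE => /andP[Hn Hw]; rewrite HS // Hw andbT /= in Hn *.
apply: contra Hn; have [->|Hr] := eqVneq w r; first by rewrite parent_root.
by move/ancestor_parent; apply.
Qed.

Lemma root_notin_subtree S v : v != r -> r \notin subtree S v.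
Proof.
move=> Hv; rewrite inE negb_and; apply/orP; right; apply: contra Hv => /ancestor_depth.
by rewrite depth_root leqn0 => /eqP/depth0 ->.
Qed.

Lemma childrenP S v c : c \in children S v -> [/\ c \in S, c != r & parent c = v].
Proof. by rewrite inE => /andP[H1 /andP[H2 /eqP H3]]. Qed.

Lemma depth_child S v c : c \in children S v -> depth c = (depth v).+1.
Proof. by case/childrenP => _ Hc <-; rewrite depth_parent. Qed.

Lemma child_edge S v c : c \in children S v -> e v c.
Proof. by case/childrenP => _ Hc <-; apply: parent_edge. Qed.

Lemma child_neq S v c : c \in children S v -> c != v.
Proof. by move/depth_child => Hd; apply/eqP => E; move: Hd; rewrite E => /n_Sn. Qed.

Lemma ancestor_child S v c : c \in children S v -> ancestor v c.
Proof.
move=> Hc; rewrite /ancestor (depth_child Hc) leqnSn subSnn /=.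
by case/childrenP: Hc => _ _ ->.
Qed.

Lemma subtree_self S v : v \in S -> v \in subtree S v.
Proof. by move=> Hv; rewrite inE Hv ancestor_refl. Qed.

Lemma subtree_child_sub S v c : c \in children S v -> subtree S c \subset subtree S v.
Proof.
move=> Hc; apply/subsetP => w; rewrite !inE => /andP[-> Ha] /=.
exact: ancestor_trans (ancestor_child Hc) Ha.
Qed.

Lemma notin_subtree_child S v c : c \in children S v -> v \notin subtree S c.
Proof.
move=> Hc; rewrite inE negb_and; apply/orP; right; apply/negP => /ancestor_depth.
by rewrite (depth_child Hc) ltnn.
Qed.

Lemma subtree_children_disjoint S v c1 c2 :
  c1 \in children S v -> c2 \in children S v -> c1 != c2 ->
  [disjoint subtree S c1 & subtree S c2].
Proof.
move=> H1 H2 Hne; apply/pred0P => w /=; rewrite !inE.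
apply: contraNF Hne => /andP[/andP[_ A1] /andP[_ A2]].
by rewrite (ancestor_eq_depth A1 A2) // (depth_child H1) (depth_child H2).
Qed.

Lemma subtree_split S v w : parent_closed S -> w \in subtree S v -> w != v ->
  exists2 c, c \in children S v & w \in subtree S c.
Proof.
move=> HS; rewrite !inE => /andP[Hw Ha] Hne.
case: (ancestor_step Ha Hne) => c [Hc Hpc Hac _].
exists c; last by rewrite !inE Hw.
by rewrite inE (parent_closed_ancestor HS Hw Hac) Hc Hpc eqxx.
Qed.

Lemma subtreeE S v : parent_closed S -> v \in S ->
  subtree S v = v |: \bigcup_(c in children S v) subtree S c.
Proof.
move=> HS Hv; apply/setP => w; rewrite in_setU1.
have [->|Hne] /= := eqVneq w v; first by rewrite subtree_self.
apply/idP/bigcupP => [Hw|[c Hc]]; last exact: (subsetP (subtree_child_sub Hc)).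
by case: (subtree_split HS Hw Hne) => c; exists c.
Qed.

Lemma subtree_leaf S v : parent_closed S -> v \in S -> children S v = set0 ->
  subtree S v = [set v].
Proof. by move=> HS Hv H0; rewrite subtreeE // H0 big_set0 setU0. Qed.

Lemma subtree_one_child S v c : parent_closed S -> v \in S -> children S v = [set c] ->
  subtree S v = v |: subtree S c.
Proof. by move=> HS Hv H1; rewrite subtreeE // H1 big_set1. Qed.

Lemma subtree_two_children S v c1 c2 : parent_closed S -> v \in S ->
  children S v = [set c1; c2] -> c1 != c2 ->
  subtree S v = v |: (subtree S c1 :|: subtree S c2).
Proof.
by move=> HS Hv H2 Hne; rewrite subtreeE // H2 big_setU1 ?inE // big_set1.
Qed.

Lemma card_subtree_one_child S v c : parent_closed S -> v \in S ->
  children S v = [set c] -> #|subtree S v| = (#|subtree S c|).+1.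
Proof.
move=> HS Hv H1; have Hc : c \in children S v by rewrite H1 set11.
by rewrite (subtree_one_child HS Hv H1) cardsU1 (notin_subtree_child Hc).
Qed.

Lemma card_subtree_two_children S v c1 c2 : parent_closed S -> v \in S ->
  children S v = [set c1; c2] -> c1 != c2 ->
  #|subtree S v| = (#|subtree S c1| + #|subtree S c2|).+1.
Proof.
move=> HS Hv H2 Hne.
have Hc1 : c1 \in children S v by rewrite H2 !inE eqxx.
have Hc2 : c2 \in children S v by rewrite H2 !inE eqxx orbT.
rewrite (subtree_two_children HS Hv H2 Hne) cardsU1 in_setU.
rewrite (negbTE (notin_subtree_child Hc1)) (negbTE (notin_subtree_child Hc2)) /=.
by rewrite cardsU (disjoint_setI0 (subtree_children_disjoint Hc1 Hc2 Hne)) cards0 subn0.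
Qed.

Lemma subtree_root S : subtree S r = S.
Proof. by apply/setP => w; rewrite inE ancestor_root andbT. Qed.

Lemma card_children_le_deg S v : #|children S v| + (v != r) <= deg e v.
Proof.
have Hsb : children S v \subset [set y | e v y].
  by apply/subsetP => c /child_edge; rewrite inE.
have [_|Hv] := eqVneq v r; first by rewrite addn0 subset_leq_card.
have Hp : parent v \notin children S v.
  by apply/negP => /depth_child; have := depth_parent Hconn Hv; lia.
have Hsb' : parent v |: children S v \subset [set y | e v y].
  by rewrite subUset Hsb sub1set inE Hsym parent_edge.
by have := subset_leq_card Hsb'; rewrite cardsU1 Hp addn1 add1n.
Qed.

Lemma children_cases S v : #|children S v| <= 2 ->
  [\/ children S v = set0, exists c, children S v = [set c]
    | exists c1 c2, c1 != c2 /\ children S v = [set c1; c2]].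
Proof.
move=> H; case: (ltngtP #|children S v| 1) => H1.
- by constructor 1; apply: cards0_eq; lia.
- have /cards2P[c1 [c2 [Hn E]]] : #|children S v| == 2 by apply/eqP; lia.
  by constructor 3; exists c1, c2.
- by constructor 2; apply/cards1P; rewrite H1.
Qed.

Local Open Scope ring_scope.

(** * Pendant binary trees *)

Definition enters S D u y q : Prop :=
  [/\ path (induced S) y q, last y q = u, uniq (y :: q) &
      {in y :: q, forall z, z != u -> (z \notin subtree S u) && (z \notin D)}].

Lemma enters_Dpath S D u y q : enters S D u y q -> u \in D ->
  is_Dpath (induced S) D y u q.
Proof.
case=> Hp Hlast Hun Hout HuD; rewrite /is_Dpath Hp Hlast eqxx Hun /=.
apply/andP; split.
  apply/allP => z Hzt; have Hzu : z != u by rewrite -Hlast mem_take_neq_last.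
  have Hzq : z \in y :: q by rewrite inE (mem_take Hzt) orbT.
  by case/andP: (Hout z Hzq Hzu).
have [->|Hyu] := eqVneq y u; first by rewrite HuD.
by case/andP: (Hout y (mem_head _ _) Hyu) => _ /negbTE ->; rewrite HuD.
Qed.

Lemma enters_child S D u c y q : u \in S -> u \notin D -> c \in children S u ->
  enters S D u y q -> enters S D c y (rcons q c).
Proof.
move=> Hu HuD Hc [Hp Hlast Hun Hout].
have [HcS _ _] := childrenP Hc; have Hcu := child_neq Hc.
have Hcsub : c \in subtree S u.
  by apply: (subsetP (subtree_child_sub Hc)); apply: subtree_self.
split.
- by rewrite rcons_path Hp Hlast /induced (child_edge Hc) Hu HcS.
- by rewrite last_rcons.
- rewrite -rcons_cons rcons_uniq Hun andbT; apply/negP => Hcq.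
  by case/andP: (Hout c Hcq Hcu); rewrite Hcsub.
- move=> z; rewrite -rcons_cons mem_rcons inE => /orP[/eqP -> /eqP //|Hzq _].
  have [->|Hzu] := eqVneq z u; first by rewrite notin_subtree_child.
  case/andP: (Hout z Hzq Hzu) => Hzs ->; rewrite andbT.
  by apply: contra Hzs; apply: (subsetP (subtree_child_sub Hc)).
Qed.

Lemma enters_from_parent S D v c : v \in S -> v \notin D -> c \in children S v ->
  enters S D c v [:: c].
Proof.
move=> Hv HvD Hc; have [HcS _ _] := childrenP Hc.
split => //=; first by rewrite /induced (child_edge Hc) Hv HcS.
  by rewrite inE andbT eq_sym (child_neq Hc).
move=> z; rewrite mem_seq2 => /orP[/eqP ->|/eqP -> /eqP //] _.
by rewrite (notin_subtree_child Hc) HvD.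
Qed.

(* The subtree at u is a full binary tree each of whose leaves carries exactly
   one pendant vertex; A is the set of those leaves. *)
Inductive pendant_binary S : T -> {set T} -> Prop :=
| PendantLeaf u l : u \in S -> children S u = [set l] -> children S l = set0 ->
    pendant_binary S u [set u]
| PendantNode u c1 c2 A1 A2 : u \in S -> c1 != c2 -> children S u = [set c1; c2] ->
    pendant_binary S c1 A1 -> pendant_binary S c2 A2 -> pendant_binary S u (A1 :|: A2).

Lemma children2_mem S u c1 c2 : children S u = [set c1; c2] ->
  c1 \in children S u /\ c2 \in children S u.
Proof. by move=> H; rewrite H !inE !eqxx ?orbT. Qed.

Lemma pendant_binary_sub S u A : pendant_binary S u A -> A \subset subtree S u.
Proof.
elim => {u A} [u l Hu _ _ | u c1 c2 A1 A2 _ _ Hch _ IH1 _ IH2].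
  by rewrite sub1set subtree_self.
case: (children2_mem Hch) => Hc1 Hc2.
rewrite subUset (subset_trans IH1 (subtree_child_sub Hc1)).
exact: subset_trans IH2 (subtree_child_sub Hc2).
Qed.

Lemma pendant_binary_disjoint S u c1 c2 A1 A2 : children S u = [set c1; c2] ->
  c1 != c2 -> pendant_binary S c1 A1 -> pendant_binary S c2 A2 -> [disjoint A1 & A2].
Proof.
move=> Hch Hne H1 H2; case: (children2_mem Hch) => Hc1 Hc2.
exact: disjointWl (pendant_binary_sub H1) (disjointWr (pendant_binary_sub H2)
  (subtree_children_disjoint Hc1 Hc2 Hne)).
Qed.

Lemma pendant_binary_card S u A : parent_closed S -> pendant_binary S u A ->
  (#|subtree S u|).+1 = (3 * #|A|)%N.
Proof.
move=> HS; elim => {u A} [u l Hu Hch Hl | u c1 c2 A1 A2 Hu Hne Hch H1 IH1 H2 IH2].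
  have Hl' : l \in children S u by rewrite Hch set11.
  have [HlS _ _] := childrenP Hl'.
  by rewrite (card_subtree_one_child HS Hu Hch) (subtree_leaf HS HlS Hl) !cards1.
rewrite (card_subtree_two_children HS Hu Hch Hne) cardsU.
rewrite (disjoint_setI0 (pendant_binary_disjoint Hch Hne H1 H2)) cards0 subn0; lia.
Qed.

Lemma pendant_node_restrict S D u c1 c2 A1 A2 :
  u \in S -> children S u = [set c1; c2] -> c1 != c2 ->
  pendant_binary S c1 A1 -> pendant_binary S c2 A2 -> D :&: subtree S u = A1 :|: A2 ->
  [/\ u \notin D, D :&: subtree S c1 = A1 & D :&: subtree S c2 = A2].
Proof.
move=> Hu Hch Hne H1 H2 HD; case: (children2_mem Hch) => Hc1 Hc2.
have S1 := pendant_binary_sub H1; have S2 := pendant_binary_sub H2.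
have restrict c c' A A' : c \in children S u -> c' \in children S u -> c != c' ->
    A \subset subtree S c -> A' \subset subtree S c' -> D :&: subtree S u = A :|: A' ->
    D :&: subtree S c = A.
  move=> Hc Hc' Hcc' SA SA' HD'; apply/setP => w; rewrite inE.
  apply/andP/idP => [[HwD Hw]|Hw].
    have : w \in A :|: A' by rewrite -HD' inE HwD (subsetP (subtree_child_sub Hc)).
    rewrite inE => /orP[//|/(subsetP SA') Hw'].
    by rewrite (disjointFr (subtree_children_disjoint Hc Hc' Hcc') Hw) in Hw'.
  have : w \in D :&: subtree S u by rewrite HD' inE Hw.
  by rewrite inE => /andP[-> _]; rewrite (subsetP SA).
split; last 2 first.
- exact: restrict Hc1 Hc2 Hne S1 S2 HD.
- by apply: restrict Hc2 Hc1 _ S2 S1 _; rewrite 1?eq_sym // setUC.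
apply/negP => HuD; have : u \in A1 :|: A2 by rewrite -HD inE HuD subtree_self.
rewrite inE => /orP[/(subsetP S1)|/(subsetP S2)];
  by rewrite (negbTE (notin_subtree_child _)).
Qed.

(* A vertex y whose path to u enters the subtree only at u gets weight at least
   2^(1 - |q|) from A: each branching halves the weight but doubles the number
   of paths. *)
Lemma pendant_binary_weight S u A : pendant_binary S u A ->
  forall D y q, D :&: subtree S u = A -> enters S D u y q ->
  half_pow rat (Some (size q)) <= \sum_(w in A) half_pow rat (distD (induced S) D y w).
Proof.
elim => {u A} [u l Hu _ _ | u c1 c2 A1 A2 Hu Hne Hch H1 IH1 H2 IH2] D y q HD Hin.
  have HuD : u \in D by move: (set11 u); rewrite -HD inE => /andP[].
  by rewrite big_set1; apply/half_pow_Dpath_le/enters_Dpath.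
have [HuD HD1 HD2] := pendant_node_restrict Hu Hch Hne H1 H2 HD.
case: (children2_mem Hch) => Hc1 Hc2.
have := IH1 D y _ HD1 (enters_child Hu HuD Hc1 Hin).
have := IH2 D y _ HD2 (enters_child Hu HuD Hc2 Hin).
rewrite (big_setU_disjoint _ (pendant_binary_disjoint Hch Hne H1 H2)) !size_rcons.
by rewrite !half_powS; lra.
Qed.

Lemma pendant_binary_parent_weight S D v c A : pendant_binary S c A ->
  D :&: subtree S c = A -> v \in S -> v \notin D -> c \in children S v ->
  1 <= \sum_(w in A) half_pow rat (distD (induced S) D v w).
Proof.
move=> HA HD Hv HvD Hc; rewrite -half_pow1.
exact: (pendant_binary_weight HA HD (enters_from_parent Hv HvD Hc)).
Qed.

Lemma pendant_binary_dominates S u A : parent_closed S -> pendant_binary S u A ->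
  forall D, D :&: subtree S u = A ->
  {in subtree S u, forall x, 1 <= exp_weight (induced S) D x}.
Proof.
move=> HS.
elim => {u A} [u l Hu Hch Hl | u c1 c2 A1 A2 Hu Hne Hch H1 IH1 H2 IH2] D HD x.
  have Hl' : l \in children S u by rewrite Hch set11.
  have [HlS _ _] := childrenP Hl'.
  have HuD : u \in D by move: (set11 u); rewrite -HD inE => /andP[].
  rewrite (subtree_one_child HS Hu Hch) (subtree_leaf HS HlS Hl) !inE.
  case/orP => /eqP ->; first exact: exp_weight_in_ge1.
  apply: (exp_weight_adj HuD); last by rewrite /induced Hsym (child_edge Hl') HlS Hu.
  apply: contra (child_neq Hl') => HlD.
  have : l \in D :&: subtree S u.
    by rewrite inE HlD (subsetP (subtree_child_sub Hl')) // subtree_self.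
  by rewrite HD inE.
have [HuD HD1 HD2] := pendant_node_restrict Hu Hch Hne H1 H2 HD.
case: (children2_mem Hch) => Hc1 Hc2.
rewrite (subtree_two_children HS Hu Hch Hne) in_setU1 in_setU.
case/orP => [/eqP ->|/orP[Hx|Hx]]; last 2 first.
- exact: IH1 HD1 x Hx.
- exact: IH2 HD2 x Hx.
have HA1 : A1 \subset D by rewrite -HD1 subsetIl.
apply: le_trans (exp_weight_ge_subset _ u HA1).
exact: pendant_binary_parent_weight H1 HD1 Hu HuD Hc1.
Qed.

Lemma enters_cons S D u l y q : induced S l y -> l \notin y :: q ->
  l \notin subtree S u -> l \notin D -> enters S D u y q -> enters S D u l (y :: q).
Proof.
move=> Hly Hl Hls HlD [Hp Hlast Hun Hout]; split => //=; first by rewrite Hly.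
  by rewrite Hl.
by move=> z; rewrite inE => /orP[/eqP -> _|/Hout]; rewrite ?Hls.
Qed.

(** * Reductions and the upper bound *)

Definition exp_dominates S D :=
  D \subset S /\ {in S, forall u, 1 <= exp_weight (induced S) D u}.

Definition reduction S R X :=
  [/\ R \subset S, r \notin R, R != set0, parent_closed (S :\: R) & X \subset R] /\
  (3 * #|X| <= #|R|)%N /\
  forall D', exp_dominates (S :\: R) D' ->
    {in R, forall y, 1 <= exp_weight (induced S) (D' :|: X) y}.

Definition reducible S := exists R X, reduction S R X.

Lemma subtree_cut S v : parent_closed S -> v \in S -> v != r ->
  [/\ subtree S v \subset S, r \notin subtree S v, subtree S v != set0
    & parent_closed (S :\: subtree S v)].
Proof.
move=> HS Hv Hvr; split.
- by apply/subsetP => w; rewrite inE => /andP[].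
- exact: root_notin_subtree.
- by apply/set0Pn; exists v; apply: subtree_self.
- exact: parent_closed_setD_subtree.
Qed.

Lemma setD_subtree S S' v : S' \subset S -> S' :\: subtree S v = S' :\: subtree S' v.
Proof.
move=> H; apply/setP => w; rewrite !inE.
by case Hw: (w \in S'); rewrite ?andbF //= (subsetP H _ Hw).
Qed.

Lemma reducible_cherry S v c1 c2 : parent_closed S -> v \in S -> v != r ->
  children S v = [set c1; c2] -> c1 != c2 ->
  children S c1 = set0 -> children S c2 = set0 -> reducible S.
Proof.
move=> HS Hv Hvr Hch Hne H1 H2; case: (children2_mem Hch) => Hc1 Hc2.
have [Hc1S _ _] := childrenP Hc1; have [Hc2S _ _] := childrenP Hc2.
have [HRS HrR HR0 HSR] := subtree_cut HS Hv Hvr.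
exists (subtree S v), [set v].
split; first by split => //; rewrite sub1set subtree_self.
split.
  rewrite cards1 (card_subtree_two_children HS Hv Hch Hne).
  by rewrite (subtree_leaf HS Hc1S H1) (subtree_leaf HS Hc2S H2) !cards1.
move=> D' [HD' _] y; have HvD : v \in D' :|: [set v] by rewrite !inE eqxx orbT.
have leaf c : c \in children S v -> 1 <= exp_weight (induced S) (D' :|: [set v]) c.
  move=> Hc; have [HcS _ _] := childrenP Hc.
  apply: (exp_weight_adj HvD); last by rewrite /induced Hsym (child_edge Hc) Hv HcS.
  rewrite !inE negb_or (child_neq Hc) andbT (notin_subset_setD HD') //.
  exact: (subsetP (subtree_child_sub Hc)) (subtree_self HcS).
rewrite (subtree_two_children HS Hv Hch Hne) (subtree_leaf HS Hc1S H1).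
rewrite (subtree_leaf HS Hc2S H2) !inE => /orP[/eqP ->|/orP[]/eqP ->]; last 2 first.
- exact: leaf.
- exact: leaf.
exact: exp_weight_in_ge1.
Qed.

Lemma reducible_chain S v c A : parent_closed S -> v \in S -> v != r ->
  children S v = [set c] -> pendant_binary S c A -> reducible S.
Proof.
move=> HS Hv Hvr Hch HA; have Hc : c \in children S v by rewrite Hch set11.
have SA := pendant_binary_sub HA; have Sc := subtree_child_sub Hc.
have [HRS HrR HR0 HSR] := subtree_cut HS Hv Hvr.
exists (subtree S v), A; split; first by split => //; apply: subset_trans SA Sc.
split; first by rewrite (card_subtree_one_child HS Hv Hch) (pendant_binary_card HS HA).
move=> D' [HD' _] y.
have HD : (D' :|: A) :&: subtree S c = A := setUI_setD HD' SA Sc.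
rewrite (subtree_one_child HS Hv Hch) in_setU1 => /orP[/eqP ->|]; last first.
  exact: pendant_binary_dominates HS HA _ HD y.
have HvD : v \notin D' :|: A.
  rewrite inE negb_or (notin_subset_setD HD' (subtree_self Hv)) /=.
  by apply: contra (notin_subtree_child Hc) => /(subsetP SA).
apply: le_trans (exp_weight_ge_subset _ v (subsetUr D' A)).
exact: pendant_binary_parent_weight HA HD Hv HvD Hc.
Qed.

(* The leaf l needs weight 1: either v is in the dominating set of the rest, or
   l collects half of the weight of v from the rest and half from A. *)
Lemma reducible_leaf_sibling S v l c A : parent_closed S -> v \in S ->
  children S v = [set l; c] -> l != c -> children S l = set0 ->
  pendant_binary S c A -> reducible S.
Proof.
move=> HS Hv Hch Hne Hl HA; case: (children2_mem Hch) => Hl' Hc.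
have [HlS Hlr _] := childrenP Hl'; have [HcS Hcr _] := childrenP Hc.
have SA := pendant_binary_sub HA.
have Hlc : l \notin subtree S c.
  by rewrite (disjointFr (subtree_children_disjoint Hl' Hc Hne) (subtree_self HlS)).
set R := l |: subtree S c.
have ScR : subtree S c \subset R by apply: subsetUr.
exists R, A; split; [split|split].
- by rewrite subUset sub1set HlS; apply/subsetP => w; rewrite inE => /andP[].
- by rewrite in_setU1 negb_or eq_sym Hlr root_notin_subtree.
- by apply/set0Pn; exists l; rewrite in_setU1 eqxx.
- rewrite /R -setDDl -(subtree_leaf HS HlS Hl) setD_subtree ?subsetDl //.
  exact/parent_closed_setD_subtree/parent_closed_setD_subtree.
- exact: subset_trans SA ScR.
- by rewrite /R cardsU1 Hlc add1n (pendant_binary_card HS HA).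
move=> D' [HD' HW] y; have HD := setUI_setD HD' SA ScR.
rewrite in_setU1 => /orP[/eqP ->|Hy].
  2: exact: pendant_binary_dominates HS HA _ HD y Hy.
have HlR : l \in R by rewrite in_setU1 eqxx.
have HlA : l \notin A by apply: contra Hlc => /(subsetP SA).
have HlD : l \notin D' :|: A by rewrite inE negb_or (notin_subset_setD HD' HlR).
have Hlv : e l v by rewrite Hsym (child_edge Hl').
have HvS' : v \in S :\: R.
  rewrite in_setD in_setU1 negb_or (notin_subtree_child Hc) Hv.
  by rewrite eq_sym (child_neq Hl').
case HvD: (v \in D').
  apply: (exp_weight_adj (v := v) _ HlD); first by rewrite inE HvD.
  by rewrite /induced Hlv HlS Hv.
have HAR := subset_trans SA ScR.
have HvD2 : v \notin D' :|: A.
  by rewrite inE HvD /=; apply: contra (notin_subtree_child Hc) => /(subsetP SA).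
have E0 := HW v HvS'.
have HlS' : l \notin S :\: R by rewrite inE HlR.
have E1 := exp_weight_extend (subsetDl S R) HD' (disjoint_setD S HAR) HvS'
  (negbT HvD) HlS HlS' HlA Hlv.
have Hin : enters S (D' :|: A) c l [:: v; c].
  apply: enters_cons (enters_from_parent Hv HvD2 Hc) => //.
    by rewrite /induced Hlv HlS Hv.
  by rewrite mem_seq2 negb_or (child_neq Hl') Hne.
have E2 := pendant_binary_weight HA HD Hin.
have HD'A : [disjoint D' & A].
  by rewrite disjoint_sym (disjointWr HD' (disjoint_setD S HAR)).
rewrite [size _]/= half_powS half_pow1 in E2.
rewrite /exp_weight big_setU_disjoint // in E0 E1 *.
lra.
Qed.

Lemma pendant_or_reducible (Hsub : subcubic e) S : parent_closed S ->
  forall v, v \in S -> v != r ->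
  [\/ children S v = set0, exists A, pendant_binary S v A | reducible S].
Proof.
move=> HS v; have [k] : exists k, (#|T| - depth v <= k)%N by exists (#|T| - depth v)%N.
elim: k v => [|k IH] v Hk Hv Hvr; first by have := depth_lt Hconn r v; lia.
have IHc c : c \in children S v ->
    [\/ children S c = set0, exists A, pendant_binary S c A | reducible S].
  move=> Hc; have [HcS Hcr _] := childrenP Hc; apply: IH => //.
  by have := depth_child Hc; have := depth_lt Hconn r c; lia.
have Hch2 : (#|children S v| <= 2)%N.
  have : (deg e v <= 3)%N := Hsub v.
  by have := card_children_le_deg S v; rewrite Hvr; lia.
case: (children_cases Hch2) => [H0|[c H1]|[c1 [c2 [Hne H2]]]].
- by constructor 1.
- have Hc : c \in children S v by rewrite H1 set11.
  case: (IHc c Hc) => [Hc0|[A HA]|Hred]; last by constructor 3.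
  + by constructor 2; exists [set v]; exact: PendantLeaf Hv H1 Hc0.
  + by constructor 3; exact: reducible_chain HS Hv Hvr H1 HA.
- case: (children2_mem H2) => Hc1 Hc2.
  case: (IHc c1 Hc1) (IHc c2 Hc2) => [H10|[A1 HA1]|?] [H20|[A2 HA2]|?];
    try by constructor 3.
  + by constructor 3; exact: reducible_cherry HS Hv Hvr H2 Hne H10 H20.
  + by constructor 3; exact: reducible_leaf_sibling HS Hv H2 Hne H10 HA2.
  + constructor 3; apply: reducible_leaf_sibling HS Hv _ _ H20 HA1.
    * by rewrite H2 setUC.
    * by rewrite eq_sym.
  + by constructor 2; exists (A1 :|: A2); exact: PendantNode Hv Hne H2 HA1 HA2.
Qed.

Lemma reduction_extends S R X D' : reduction S R X -> exp_dominates (S :\: R) D' ->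
  (3 * #|D'| <= #|S :\: R| + 2)%N ->
  exp_dominates S (D' :|: X) /\ (3 * #|D' :|: X| <= #|S| + 2)%N.
Proof.
case=> [[HRS _ _ _ HXR] [HXc HW]] HD' HD'c; have [HD'S HD'W] := HD'.
split; first split.
- by rewrite subUset (subset_trans HXR HRS) (subset_trans HD'S (subsetDl S R)).
- move=> u Hu; case HuR: (u \in R); first exact: HW.
  have HuS' : u \in S :\: R by rewrite inE HuR.
  apply: le_trans (HD'W u HuS') _.
  exact: exp_weight_induced_mono (subsetDl S R) (disjoint_setD S HXR) HuS'.
have HS : #|S| = (#|S :\: R| + #|R|)%N.
  by rewrite cardsD (setIidPr HRS) subnK // subset_leq_card.
by have := (leq_card_setU D' X).1; rewrite HS; lia.
Qed.

Lemma exp_dominates_root_only S : parent_closed S -> r \in S -> children S r = set0 ->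
  exp_dominates S [set r] /\ (3 * #|[set r]| <= #|S| + 2)%N.
Proof.
move=> HS Hr H0; have HS1 : S = [set r] by rewrite -(subtree_root S) subtree_leaf.
rewrite HS1 cards1; split => //; split => // u; rewrite inE => /eqP ->.
exact: exp_weight_in_ge1 (set11 r).
Qed.

Lemma exp_dominates_root_leaf S c : parent_closed S -> r \in S ->
  children S r = [set c] -> children S c = set0 ->
  exp_dominates S [set r] /\ (3 * #|[set r]| <= #|S| + 2)%N.
Proof.
move=> HS Hr Hch H0; have Hc : c \in children S r by rewrite Hch set11.
have [HcS _ _] := childrenP Hc.
have HS2 : S = r |: [set c].
  by rewrite -{1}(subtree_root S) (subtree_one_child HS Hr Hch) subtree_leaf.
split; last by rewrite HS2 cardsU1 inE eq_sym (child_neq Hc) !cards1.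
split; first by rewrite sub1set.
move=> u; rewrite {1}HS2 !inE => /orP[/eqP ->|/eqP ->].
  exact: exp_weight_in_ge1 (set11 r).
apply: (exp_weight_adj (set11 r)); first by rewrite inE (child_neq Hc).
by rewrite /induced Hsym (child_edge Hc) Hr HcS.
Qed.

Lemma exp_dominates_root_pendant S c A : parent_closed S -> r \in S ->
  children S r = [set c] -> pendant_binary S c A ->
  exp_dominates S A /\ (3 * #|A| <= #|S| + 2)%N.
Proof.
move=> HS Hr Hch HA; have Hc : c \in children S r by rewrite Hch set11.
have SA := pendant_binary_sub HA.
have HSc : S = r |: subtree S c.
  by rewrite -{1}(subtree_root S) (subtree_one_child HS Hr Hch).
have HD : A :&: subtree S c = A by apply/setIidPl.
split; last first.
  rewrite HSc cardsU1 (notin_subtree_child Hc) add1n.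
  by rewrite (pendant_binary_card HS HA) leq_addr.
split; first by apply: subset_trans SA _; apply/subsetP => w; rewrite inE => /andP[].
move=> u; rewrite {1}HSc in_setU1 => /orP[/eqP ->|]; last first.
  exact: pendant_binary_dominates HS HA _ HD u.
have HrA : r \notin A by apply: contra (notin_subtree_child Hc) => /(subsetP SA).
apply: le_trans (exp_weight_ge_subset _ r (subxx A)).
exact: pendant_binary_parent_weight HA HD Hr HrA Hc.
Qed.

Lemma exp_dominates_small (Hsub : subcubic e) (Hleaf : (deg e r <= 1)%N) S :
  parent_closed S -> r \in S ->
  exists D, exp_dominates S D /\ (3 * #|D| <= #|S| + 2)%N.
Proof.
elim: {S}_.+1 {-2}S (ltnSn #|S|) => // n IH S HSn HS Hr.
have : (#|children S r| <= 1)%N.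
  by have := card_children_le_deg S r; rewrite eqxx addn0 => /leq_trans; apply.
rewrite leq_eqVlt ltnS leqn0 => /orP[/cards1P[c Hch]|/eqP/cards0_eq H0]; last first.
  by exists [set r]; exact: exp_dominates_root_only.
have Hc : c \in children S r by rewrite Hch set11.
have [HcS Hcr _] := childrenP Hc.
case: (pendant_or_reducible Hsub HS HcS Hcr) => [H0|[A HA]|[R [X Hred]]].
- by exists [set r]; exact: exp_dominates_root_leaf Hch H0.
- by exists A; exact: exp_dominates_root_pendant Hch HA.
case: (Hred) => [[HRS HrR HR0 HSR _] _].
have HS'n : (#|S :\: R| < n)%N.
  rewrite ltnS in HSn; apply: leq_trans HSn; rewrite cardsD (setIidPr HRS) ltn_subrL.
  by rewrite !card_gt0 HR0; apply/set0Pn; exists r.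
have HrS' : r \in S :\: R by rewrite inE HrR.
have [D' [HD' HD'c]] := IH _ HS'n HSR HrS'.
by exists (D' :|: X); exact: reduction_extends Hred HD' HD'c.
Qed.

End Subtrees.

Lemma gamma_e_upper_bound (T : finType) (e : rel T) (Hsym : symmetric e)
    (Hconn : forall x y : T, connect e x y)
    (Hcard : #|[set p : T * T | e p.1 p.2]| = 2 * (#|T| - 1))
    (Hsub : subcubic e) (u0 : T) :
  3 * gamma_e e <= #|T| + 2.
Proof.
have [r Hleaf] := exists_leaf Hsym Hconn Hcard u0.
have HS : parent_closed Hconn r [set: T] by move=> w _; rewrite inE.
have [D [[_ HW] Hc]] := exp_dominates_small Hsym Hsub Hleaf HS (in_setT r).
rewrite cardsT in Hc; apply: leq_trans Hc; rewrite leq_mul2l gamma_e_le //.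
by apply/forallP => u; have := HW u (in_setT u); rewrite induced_setT.
Qed.

Theorem corollary1 (T : finType) (e : rel T)
    (Hsimple : simple_graph e) (Htree : is_tree e) (Hsub : subcubic e)
    (R : realFieldType) (x : T -> R) (Hx : porous_frac_feasible e x) :
  ((gamma_e e)%:R <= 2%:R * \sum_(u : T) x u)%R.
Proof.
case: Hsimple => Hsym _; case: Htree => /card_gt0P[u0 _] Hconn Hcard.
have HL := porous_frac_lower_bound Hsym Hconn Hcard Hsub u0 Hx.
have HU := gamma_e_upper_bound Hsym Hconn Hcard Hsub u0.
have : ((3 * gamma_e e)%:R <= (#|T| + 2)%:R :> R)%R by rewrite ler_nat.
by rewrite natrM; lra.
Qed.
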